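(* Assume Condition AGCT (see context) holds and that the event $\mathrm{Good}_m$ occurs. Then $\widehat T_n\subseteq T^*$, where $T^*$ is the minimal complete context tree of the processes.
   Context: Notation. $A$ is a finite alphabet. For $k\ge0$, $A^{-1}_{-k}$ is the set of strings $w=w_{-k}\cdots w_{-1}$ of length $k$ (for $k=0$ the empty string $e$); $A^{-1}_{-\infty}$ is the set of left-infinite sequences $x=\cdots x_{-2}x_{-1}$; $A^*=A^{-1}_{-\infty}\cup\bigcup_{k\ge0}A^{-1}_{-k}$. $|w|$ is the length, $w^{-1}_{-k}$ the suffix of length $k$; $w\preceq w'$ ($w'\succeq w$) means $w$ is a suffix of $w'$; for nonempty $w$, $\mathrm{par}(w)=w_{-|w|+1}\cdots w_{-1}$. A tree is a set $\widetilde T\subseteq A^*$ containing $e$ and the parent of each of its nonempty elements; a leaf is an element that is the parent of no element; complete means each non-leaf has exactly $|A|$ children. For a tree $\widetilde T$ and $x\in A^{-1}_{-\infty}$, $K_{\widetilde T}(x)=\sup\{k:x^{-1}_{-k}\in\widetilde T\}$, $\widetilde T(x)=x^{-1}_{-K_{\widetilde T}(x)}$. $\Delta^A$: probability distributions on $A$. $\|v\|_{L,q}=(\frac1L\sum_\ell|v_\ell|^q)^{1/q}$, $\|v\|_{L,\infty}=\max_\ell|v_\ell|$. Model. For $\ell=1,\dots,L$, $X(\ell)$ is a stationary ergodic $A$-valued process with transition probabilities $p_\ell(a\mid x)=\Pr(X_0(\ell)=a\mid X^{-1}_{-\infty}(\ell)=x)$. A tree $\widetilde T$ is a context tree for all processes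 if $p_\ell(\cdot\mid x)=p_\ell(\cdot\mid y)$ whenever $\widetilde T(x)=\widetilde T(y)$, for all $\ell$; $T^*$ denotes the minimal complete (possibly infinite) such tree. One observes $X_1^n(\ell)$ for each $\ell$. $N_{j,\ell}(w)$ is the number of occurrences of the finite string $w$ as a consecutive block in $X_1^j(\ell)$ (0 for infinite $w$); $wa$ is concatenation. If $\min_\ell N_{n-1,\ell}(w)>0$: $\hat p_{n,\ell}(a\mid w)=N_{n,\ell}(wa)/N_{n-1,\ell}(w)$, $\bar p_{n,\ell}(a\mid w)=\frac{1}{N_{n-1,\ell}(w)}\sum_{i=|w|+1}^{n}\mathbf 1\{X^{i-1}_{i-|w|}(\ell)=w\}p_\ell(a\mid X^{i-1}_{-\infty}(\ell))$; otherwise both $=1/|A|$. Metrics $d_\ell:\Delta^A\times\Delta^A\to[0,1]$; $d(q,q')=(d_\ell(q_\ell,q'_\ell))_\ell$; $\hat p_n(\cdot|w)=(\hat p_{n,\ell}(\cdot|w))_\ell$. Confidence radii $\mathrm{conf}(w)=(\mathrm{conf}_\ell(w))_{\ell}$, $w\in A^*$. Event $\mathrm{Good}_m$: for all $w\in A^*$ with $\min_\ell N_{n-1,\ell}(w)>0$, $\|(d_\ell(\bar p_{n,\ell}(\cdot|w),\hat p_{n,\ell}(\cdot|w))/\mathrm{conf}_\ell(w))_\ell\|_{L,m}\le1$. Estimator. Fix $c>1$. $E_n=\{w\in A^*:\min_\ell N_{n-1,\ell}(w)>0\}$. For nonempty $w\in E_n$, $\mathsf{CanRmv}(w)=1$ if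 for all $w',w''\in E_n$ with $w\preceq w'$, $\mathrm{par}(w)\preceq w''$: $\|d(\hat p_n(\cdot|w'),\hat p_n(\cdot|w''))\|_{L,k}\le c\|\mathrm{conf}(w')\|_{L,r}+c\|\mathrm{conf}(w'')\|_{L,r}$, and $\mathsf{CanRmv}(w)=0$ otherwise. PruneTree: start with $\widehat T_n=E_n$, all nodes unexamined; while $\widehat T_n$ has an unexamined leaf $w$ ($w\ne e$), remove $w$ if $\mathsf{CanRmv}(w)=1$, and mark $w$ examined; output $\widehat T_n$. Condition AGCT: the setting holds with $0\le\mathrm{conf}_\ell(w)\le1$, $\mathrm{conf}_\ell(w)\le\mathrm{conf}_\ell(w')$ whenever $w\preceq w'$, and positive extended integers $k,r,m$ with either ($k\le m$, $r\ge km/(m-k)$) or $k\le r=m=\infty$. *)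

From HB Require Import structures.
From Stdlib Require Import Relations.
From mathcomp Require Import all_boot all_order all_algebra.
From mathcomp Require Import all_classical all_reals all_analysis.
Set Implicit Arguments. Unset Strict Implicit. Unset Printing Implicit Defensive.
Import Order.TTheory GRing.Theory Num.Theory.
Local Open Scope classical_set_scope.
Local Open Scope ring_scope.

(* A finite string w = w_{-k} ... w_{-1} is the seq [:: w_{-k}; ...; w_{-1}]
   (reading order).  A left-infinite sequence x = ... x_{-2} x_{-1} is a
   function x : nat -> A with x j = x_{-(j+1)}.                         *)
Section Strings.
Variable A : finType.

Inductive str := SFin of seq A | SInf of (nat -> A).

Definition pre (x : nat -> A) (k : nat) : seq A := rev (mkseq x k).

Definition par (w : seq A) : seq A := behead w.

Definition sfx (u v : str) : Prop :=
  match u, v with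
  | SFin w, SFin w' => suffix w w'
  | SFin w, SInf x => w = pre x (size w)
  | SInf x, SInf y => x = y
  | SInf _, SFin _ => False
  end.

Definition is_tree (T : set str) : Prop :=
  [/\ T (SFin [::]),
      (forall w, T (SFin w) -> w <> [::] -> T (SFin (par w))) &
      (forall x, T (SInf x) -> forall k, T (SFin (pre x k)))].

Definition is_leaf (T : set str) (u : str) : Prop :=
  T u /\ match u with
         | SFin w => forall a, ~ T (SFin (a :: w))
         | SInf _ => True
         end.

Definition complete (T : set str) : Prop :=
  forall w, T (SFin w) -> ~ is_leaf T (SFin w) ->
    #|[set a : A | `[< T (SFin (a :: w)) >] ]| = #|A|.

(* ctx_of T x u  <->  u = T(x) = x^{-1}_{-K_T(x)},
   K_T(x) = sup {k in N \cup {oo} : x^{-1}_{-k} \in T}, x^{-1}_{-oo} = x *)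
Definition ctx_of (T : set str) (x : nat -> A) (u : str) : Prop :=
  match u with
  | SFin w => exists k, [/\ w = pre x k, T (SFin (pre x k)),
                  (forall j, T (SFin (pre x j)) -> (j <= k)%N) & ~ T (SInf x)]
  | SInf y => y = x /\
      ((forall k, exists j, (k <= j)%N /\ T (SFin (pre x j))) \/ T (SInf x))
  end.

End Strings.

Arguments SFin {A}.
Arguments SInf {A}.

Inductive xnat := XN of nat | XInf.
Definition xpos (e : xnat) : Prop := if e is XN n then (0 < n)%N else True.
Definition xle (e f : xnat) : Prop :=
  match e, f with
  | _, XInf => True
  | XInf, XN _ => False
  | XN a, XN b => (a <= b)%N
  end.

Section ContextTrees.
Variables (R : realType) (A : finType) (L : nat).

(* p l x a = p_l(a | x) *)
Definition is_context_tree (p : 'I_L -> (nat -> A) -> A -> R) (T : set (str A)) :=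
  is_tree T /\
  forall x y u, ctx_of T x u -> ctx_of T y u -> forall l, p l x = p l y.

Definition is_complete_context_tree p T := is_context_tree p T /\ complete T.

Definition is_minimal_complete_context_tree p (T : set (str A)) :=
  is_complete_context_tree p T /\
  forall T', is_complete_context_tree p T' -> T' `<=` T -> T' = T.

End ContextTrees.

Section Model.
Variables (R : realType) (A : finType) (L : nat).
Variables (d0 : measure_display) (Omega : measurableType d0).
Variable (P : probability Omega R).

Definition is_dist (q : A -> R) : Prop :=
  (forall a, 0 <= q a) /\ \sum_(a : A) q a = 1.

Definition coord_sets (I : Type) : set (set (I -> A)) :=
  [set C | exists (i : I) (a : A), C = [set y | y i = a]].
Definition prod_measurable (I : Type) (B : set (I -> A)) : Prop :=
  <<s @coord_sets I >> B.

Definition past0 (Y : int -> Omega -> A) (w : Omega) : nat -> A :=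
  fun j => Y (- (j%:Z) - 1) w.

Definition process_model (X : 'I_L -> int -> Omega -> A)
    (p : 'I_L -> (nat -> A) -> A -> R) : Prop :=
  forall l : 'I_L,
  (forall (i : int) (a : A), measurable (X l i @^-1` [set a])) /\
  (* stationarity (shift invariance of the finite-dimensional laws) *)
  (forall (i : int) (s : seq A),
     P [set w | [seq X l (i + j%:Z) w | j <- iota 0 (size s)] = s] =
     P [set w | [seq X l (i + 1 + j%:Z) w | j <- iota 0 (size s)] = s]) /\
  (forall B : set (int -> A), prod_measurable B ->
     [set y | B (fun i => y (i + 1))] = B ->
     P [set w | B (fun i => X l i w)] = 0%E \/
     P [set w | B (fun i => X l i w)] = 1%E) /\
  (* p l is a (regular) version of the conditional law of X_0 given the past *)
  (forall x, is_dist (p l x)) /\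
  (forall a, measurable_fun setT (fun w => p l (past0 (X l) w) a)) /\
  (forall a (B : set (nat -> A)), prod_measurable B ->
     P ([set w | X l 0 w = a] `&` [set w | B (past0 (X l) w)]) =
     (\int[P]_(w in [set w | B (past0 (X l) w)]) (p l (past0 (X l) w) a)%:E)%E).

End Model.

(* Xs l : int -> A is the realized path of X(l).                        *)
Section Estimator.
Variables (R : realType) (A : finType) (L : nat).
Variable (Xs : 'I_L -> int -> A).
Variable (p : 'I_L -> (nat -> A) -> A -> R).

Definition block (Y : int -> A) (i : int) (k : nat) : seq A :=
  [seq Y (i - k%:Z + 1 + j%:Z) | j <- iota 0 k].

(* N_{j}(w): occurrences of w as a block of X_1^j (blocks ending at
   times i = |w|, ..., j; for w = e this gives j + 1) *)
Definition Ncount (Y : int -> A) (j : nat) (w : seq A) : nat :=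
  count (fun i : nat => block Y i%:Z (size w) == w) (iota (size w) (j.+1 - size w)).

Definition posN (n : nat) (w : seq A) : bool :=
  [forall l : 'I_L, (0 < Ncount (Xs l) n.-1 w)%N].

Definition phat (n : nat) (l : 'I_L) (w : seq A) : A -> R := fun a =>
  if posN n w then (Ncount (Xs l) n (rcons w a))%:R / (Ncount (Xs l) n.-1 w)%:R
  else #|A|%:R^-1.

Definition past (Y : int -> A) (i : nat) : nat -> A :=
  fun j => Y (i%:Z - 1 - j%:Z).

Definition pbar (n : nat) (l : 'I_L) (w : seq A) : A -> R := fun a =>
  if posN n w then
    (Ncount (Xs l) n.-1 w)%:R^-1 *
    \sum_((size w).+1 <= i < n.+1)
       (if block (Xs l) (i%:Z - 1) (size w) == w then p l (past (Xs l) i) a else 0)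
  else #|A|%:R^-1.

Definition xinv (e : xnat) : R := if e is XN n then n%:R^-1 else 0.

Definition lnorm (q : xnat) (v : 'I_L -> R) : R :=
  match q with
  | XN n => ((L%:R)^-1 * \sum_(l < L) `|v l| ^+ n) `^ (n%:R^-1)
  | XInf => \big[Num.max/0]_(l < L) `|v l|
  end.

Definition AGCT (d : 'I_L -> (A -> R) -> (A -> R) -> R)
    (conf : str A -> 'I_L -> R) (k r m : xnat) : Prop :=
  [/\ (forall l q q', is_dist q -> is_dist q' -> 0 <= d l q q' <= 1),
      (forall l q q', is_dist q -> is_dist q' -> (d l q q' = 0 <-> q = q')),
      (forall l q q', is_dist q -> is_dist q' -> d l q q' = d l q' q) &
      (forall l q q' q'', is_dist q -> is_dist q' -> is_dist q'' ->
          d l q q'' <= d l q q' + d l q' q'')] /\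
  ((forall w l, 0 <= conf w l <= 1) /\
   (forall w w' l, sfx w w' -> conf w l <= conf w' l)) /\
  (* exponents; r >= km/(m-k) is read as 1/r <= 1/k - 1/m, 1/oo = 0 *)
  [/\ xpos k, xpos r, xpos m &
      ((xle k m /\ xinv r <= xinv k - xinv m) \/
       (xle k r /\ r = XInf /\ m = XInf))].

(* the event Good_m (ratio d/conf read as 0 when d = 0, and as +oo when
   conf = 0 < d) *)
Definition Good (d : 'I_L -> (A -> R) -> (A -> R) -> R)
    (conf : str A -> 'I_L -> R) (n : nat) (m : xnat) : Prop :=
  forall w : seq A, posN n w ->
    (forall l, conf (SFin w) l = 0 -> d l (pbar n l w) (phat n l w) = 0) /\
    lnorm m (fun l => d l (pbar n l w) (phat n l w) / conf (SFin w) l) <= 1.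

Definition En (n : nat) : set (seq A) := [set w | posN n w].

Definition CanRmv (d : 'I_L -> (A -> R) -> (A -> R) -> R)
    (conf : str A -> 'I_L -> R) (c : R) (k r : xnat) (n : nat) (w : seq A) : Prop :=
  forall w' w'', En n w' -> En n w'' -> suffix w w' -> suffix (par w) w'' ->
    lnorm k (fun l => d l (phat n l w') (phat n l w'')) <=
    c * lnorm r (conf (SFin w')) + c * lnorm r (conf (SFin w'')).

(* PruneTree: states are (current tree, examined nodes) *)
Inductive prune_step (CR : seq A -> Prop) :
    set (seq A) * set (seq A) -> set (seq A) * set (seq A) -> Prop :=
| prune_remove (T M : set (seq A)) (w : seq A) :
    T w -> w <> [::] -> ~ M w -> (forall a, ~ T (a :: w)) -> CR w ->
    prune_step CR (T, M) (T `\ w, M `|` [set w])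
| prune_keep (T M : set (seq A)) (w : seq A) :
    T w -> w <> [::] -> ~ M w -> (forall a, ~ T (a :: w)) -> ~ CR w ->
    prune_step CR (T, M) (T, M `|` [set w]).

Definition prune_terminal (st : set (seq A) * set (seq A)) : Prop :=
  ~ exists w, [/\ st.1 w, w <> [::], ~ st.2 w & forall a, ~ st.1 (a :: w)].

Definition PruneTree_output d conf c k r n (Th : set (seq A)) : Prop :=
  exists M, clos_refl_trans _ (prune_step (CanRmv d conf c k r n)) (En n, set0) (Th, M)
            /\ prune_terminal (Th, M).

End Estimator.

(* A node [w] of E_n outside T* can always be removed.  Since T* is
   complete and [w] is not in it, [par w] has no child in T*, so every past ending
   in [par w] has the same T*-context and the empirical averages [pbar (.|w')] of
   all extensions [w'] of [par w] coincide with one transition law [p_l(.|x)].  On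
   Good_m, Hoelder's inequality for power means with [1/k = 1/m + 1/s] turns
   [|| d(pbar, phat) / conf ||_m <= 1] into [|| d(pbar, phat) ||_k <= || conf ||_r];
   the triangle inequality through [p_l(.|x)] and Minkowski's inequality then give
   CanRmv(w), as [c >= 1].  PruneTree stops only when every unexamined node has a
   child, so a surviving node outside T* would have a surviving child outside T*,
   and so on, contradicting the bounded depth of E_n. *)

From HB Require Import structures.
From Stdlib Require Import Relations.
From mathcomp Require Import all_boot all_order all_algebra.
From mathcomp Require Import all_classical all_reals all_analysis.
From mathcomp Require Import ring zify.
Set Implicit Arguments. Unset Strict Implicit. Unset Printing Implicit Defensive.
Import Order.TTheory GRing.Theory Num.Theory.
Local Open Scope classical_set_scope.
Local Open Scope ring_scope.

Section PowerMean.
Variables (R : realType) (L : nat).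
Hypothesis L_gt0 : (0 < L)%N.
Implicit Types (q s t : R) (u v w : 'I_L -> R).

Definition avg v : R := L%:R^-1 * \sum_(l < L) v l.
Definition pmean q v : R := avg (fun l => v l `^ q) `^ q^-1.
Definition vmax v : R := \big[Num.max/0]_(l < L) v l.

Lemma avg_ge0 v : (forall l, 0 <= v l) -> 0 <= avg v.
Proof. by move=> v0; rewrite mulr_ge0 ?invr_ge0 ?ler0n ?sumr_ge0. Qed.

Lemma ler_avg v w : (forall l, v l <= w l) -> avg v <= avg w.
Proof. by move=> vw; rewrite ler_wpM2l ?invr_ge0 ?ler0n ?ler_sum. Qed.

Lemma avgD v w : avg (fun l => v l + w l) = avg v + avg w.
Proof. by rewrite /avg big_split mulrDr. Qed.

Lemma avgZ a v : avg (fun l => a * v l) = a * avg v.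
Proof. by rewrite /avg -mulr_sumr mulrCA. Qed.

Lemma avg_cst a : avg (fun=> a) = a.
Proof.
by rewrite /avg sumr_const card_ord -[a *+ L]mulr_natl mulKf // pnatr_eq0 -lt0n.
Qed.

Lemma avg_eq0 v : (forall l, 0 <= v l) -> avg v = 0 -> forall l, v l = 0.
Proof.
move=> v0 /eqP; rewrite mulf_eq0 invr_eq0 pnatr_eq0 (gtn_eqF L_gt0) /= => /eqP s0 l.
exact: (psumr_eq0P (P := predT) _ s0).
Qed.

Lemma powRK (x q : R) : 0 <= x -> q != 0 -> (x `^ q) `^ q^-1 = x.
Proof. by move=> x0 q0; rewrite -powRrM mulfV // powRr1. Qed.

Lemma powRKV (x q : R) : 0 <= x -> q != 0 -> (x `^ q^-1) `^ q = x.
Proof. by move=> x0 q0; rewrite -powRrM mulVf // powRr1. Qed.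

Lemma pmean_ge0 q v : 0 <= pmean q v.
Proof. exact: powR_ge0. Qed.

Lemma powR_pmean q v : q != 0 -> pmean q v `^ q = avg (fun l => v l `^ q).
Proof. by move=> q0; rewrite powRKV // avg_ge0 // => l; apply: powR_ge0. Qed.

Lemma pmean_eq0 q v : 0 < q -> pmean q v = 0 -> forall l, v l = 0.
Proof.
move=> q0 v0 l; apply: (@powR_eq0_eq0 _ _ q).
apply: (avg_eq0 (fun l => powR_ge0 _ _)) l.
by rewrite -powR_pmean ?gt_eqF // v0 powR0 ?gt_eqF.
Qed.

Lemma pmean_cst q a : q != 0 -> 0 <= a -> pmean q (fun=> a) = a.
Proof. by move=> q0 a0; rewrite /pmean avg_cst powRK. Qed.

Lemma ler_pmean q u v : 0 < q -> (forall l, 0 <= u l <= v l) -> pmean q u <= pmean q v.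
Proof.
move=> q0 uv; apply: ge0_ler_powR.
- by rewrite invr_ge0 ltW.
- by rewrite nnegrE; apply: avg_ge0 => l; apply: powR_ge0.
- by rewrite nnegrE; apply: avg_ge0 => l; apply: powR_ge0.
apply: ler_avg => l; have /andP[u0 uv'] := uv l.
by apply: (ge0_ler_powR (ltW q0)) => //; rewrite nnegrE // (le_trans u0 uv').
Qed.

Lemma pmeanZ q a v : 0 < q -> 0 <= a -> (forall l, 0 <= v l) ->
  pmean q (fun l => a * v l) = a * pmean q v.
Proof.
move=> q0 a0 v0; rewrite /pmean.
under eq_fun do rewrite powRM //.
rewrite avgZ powRM ?powRK ?gt_eqF ?powR_ge0 //.
by apply: avg_ge0 => l; apply: powR_ge0.
Qed.

Lemma pmean_powR e f v : 0 < e -> 0 < f -> (forall l, 0 <= v l) ->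
  pmean (f / e) (fun l => v l `^ e) = avg (fun l => v l `^ f) `^ (e / f).
Proof.
move=> e0 f0 v0; rewrite /pmean invf_div; congr (avg _ `^ _); apply/funext => l.
by rewrite -powRrM mulrC mulfVK ?gt_eqF.
Qed.

Lemma avg_mul_young (P Q : R) u v : 0 < P -> 0 < Q -> P^-1 + Q^-1 = 1 ->
  (forall l, 0 <= u l) -> (forall l, 0 <= v l) ->
  avg (fun l => u l * v l) <= avg (fun l => u l `^ P) / P + avg (fun l => v l `^ Q) / Q.
Proof.
move=> P0 Q0 PQ u0 v0; rewrite ![avg _ / _]mulrC -!avgZ -avgD.
by apply: ler_avg => l; rewrite ![_^-1 * _]mulrC; apply: conjugate_powR.
Qed.

Lemma hoelder_avg (P Q : R) u v : 0 < P -> 0 < Q -> P^-1 + Q^-1 = 1 ->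
  (forall l, 0 <= u l) -> (forall l, 0 <= v l) ->
  avg (fun l => u l * v l) <= pmean P u * pmean Q v.
Proof.
move=> P0 Q0 PQ u0 v0.
have [a_eq0|a_neq0] := eqVneq (pmean P u) 0.
  by rewrite a_eq0 mul0r -(avg_cst 0); under eq_fun do rewrite (pmean_eq0 P0 a_eq0) mul0r.
have [b_eq0|b_neq0] := eqVneq (pmean Q v) 0.
  by rewrite b_eq0 mulr0 -(avg_cst 0); under eq_fun do rewrite (pmean_eq0 Q0 b_eq0) mulr0.
set a := pmean P u in a_neq0 *; set b := pmean Q v in b_neq0 *.
have a0 : 0 < a by rewrite lt0r a_neq0 pmean_ge0.
have b0 : 0 < b by rewrite lt0r b_neq0 pmean_ge0.
(* Young's inequality applied to [u / a] and [v / b], whose power means are 1. *)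
have normal1 (q : R) (x : 'I_L -> R) : 0 < q -> (forall l, 0 <= x l) ->
    0 < pmean q x -> avg (fun l => ((pmean q x)^-1 * x l) `^ q) = 1.
  move=> q0 x0 m0; rewrite -powR_pmean ?gt_eqF //.
  by rewrite pmeanZ // ?invr_ge0 ?(ltW m0) // mulVf ?gt_eqF // powR1.
have inv_ge0 (x : R) : 0 < x -> 0 <= x^-1 by move=> x0; rewrite invr_ge0 ltW.
have young := avg_mul_young P0 Q0 PQ
  (fun l => mulr_ge0 (inv_ge0 _ a0) (u0 l)) (fun l => mulr_ge0 (inv_ge0 _ b0) (v0 l)).
rewrite (normal1 P u P0 u0 a0) (normal1 Q v Q0 v0 b0) !mul1r PQ in young.
clearbody a b.
have -> : (fun l => u l * v l) = (fun l => (a * b) * ((a^-1 * u l) * (b^-1 * v l))).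
  apply/funext => l.
  by rewrite mulrACA (mulVKf (lt0r_neq0 a0)) (mulVKf (lt0r_neq0 b0)).
by rewrite avgZ; apply: ler_piMr young; apply: mulr_ge0; apply: ltW.
Qed.

Lemma pmean_le_exp s t v : 0 < s -> s <= t -> (forall l, 0 <= v l) ->
  pmean s v <= pmean t v.
Proof.
move=> s0; rewrite le_eqVlt => /predU1P[<- //|st] v0.
have t0 : 0 < t := lt_trans s0 st.
have ts0 : 0 < t - s by rewrite subr_gt0.
have conj : (t / s)^-1 + (t / (t - s))^-1 = 1.
  by rewrite !invf_div; field; rewrite gt_eqF.
have hs : avg (fun l => v l `^ s) <= avg (fun l => v l `^ t) `^ (s / t).
  have := @hoelder_avg (t / s) (t / (t - s)) (fun l => v l `^ s) (fun=> 1)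
    (divr_gt0 t0 s0) (divr_gt0 t0 ts0) conj (fun l => powR_ge0 _ _) (fun=> ler01).
  rewrite pmean_powR // pmean_cst ?(gt_eqF (divr_gt0 t0 ts0)) // mulr1 => h.
  by apply: le_trans _ h; apply: ler_avg => l; rewrite mulr1.
apply: (@le_trans _ _ ((avg (fun l => v l `^ t) `^ (s / t)) `^ s^-1)).
  rewrite /pmean; apply: ge0_ler_powR => //.
  - by rewrite invr_ge0 ltW.
  - by rewrite nnegrE; apply: avg_ge0 => l; apply: powR_ge0.
  - by rewrite nnegrE powR_ge0.
by rewrite -powRrM mulrAC divff ?gt_eqF // mul1r.
Qed.

Lemma pmean_hoelder a b s u v : 0 < a -> a < b -> 0 < s -> s^-1 = a^-1 - b^-1 ->
  (forall l, 0 <= u l) -> (forall l, 0 <= v l) ->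
  pmean a (fun l => u l * v l) <= pmean b u * pmean s v.
Proof.
move=> a0 ab s0 hs u0 v0; have b0 : 0 < b := lt_trans a0 ab.
have conj : (b / a)^-1 + (s / a)^-1 = 1 by rewrite !invf_div hs; field; rewrite !lt0r_neq0.
have := @hoelder_avg (b / a) (s / a) (fun l => u l `^ a) (fun l => v l `^ a)
  (divr_gt0 b0 a0) (divr_gt0 s0 a0) conj (fun l => powR_ge0 _ _) (fun l => powR_ge0 _ _).
rewrite !pmean_powR // => h; rewrite /pmean; under eq_fun do rewrite powRM //.
have Z0 : 0 <= avg (fun l => u l `^ a * v l `^ a).
  by apply: avg_ge0 => l; rewrite mulr_ge0 ?powR_ge0.
move: Z0 h; generalize (avg (fun l => u l `^ a * v l `^ a))
  (avg (fun l => u l `^ b)) (avg (fun l => v l `^ s)) => Z X Y Z0 h.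
have powK x y : (x `^ (a / y)) `^ a^-1 = x `^ y^-1.
  by rewrite -powRrM mulrAC (divff (lt0r_neq0 a0)) mul1r.
rewrite -(powK X b) -(powK Y s) -powRM ?powR_ge0 //.
by apply: ge0_ler_powR h; rewrite ?invr_ge0 ?ltW // nnegrE mulr_ge0 ?powR_ge0.
Qed.

Lemma pmean1 v : (forall l, 0 <= v l) -> pmean 1 v = avg v.
Proof.
move=> v0; rewrite /pmean invr1 powRr1; last by apply: avg_ge0 => l; apply: powR_ge0.
by under eq_fun do rewrite powRr1 //.
Qed.

Lemma pmean_minkowski q u v : 1 <= q -> (forall l, 0 <= u l) -> (forall l, 0 <= v l) ->
  pmean q (fun l => u l + v l) <= pmean q u + pmean q v.
Proof.
move=> q1 u0 v0; pose w l := u l + v l.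
have w0 l : 0 <= w l by rewrite addr_ge0.
move: q1; rewrite le_eqVlt => /predU1P[<-|q1]; first by rewrite !pmean1 // avgD.
have q0 : 0 < q := lt_trans ltr01 q1.
have q10 : 0 < q - 1 by rewrite subr_gt0.
have conj : q^-1 + (q / (q - 1))^-1 = 1 by rewrite invf_div; field; rewrite gt_eqF.
have hoelder_w x : (forall l, 0 <= x l) -> avg (fun l => x l * w l `^ (q - 1)) <=
    pmean q x * avg (fun l => w l `^ q) `^ ((q - 1) / q).
  move=> x0; rewrite -pmean_powR //.
  exact: hoelder_avg (divr_gt0 q0 q10) conj x0 (fun l => powR_ge0 _ _).
set S := avg (fun l => w l `^ q).
have S0 : 0 <= S by apply: avg_ge0 => l; apply: powR_ge0.
(* [w^q = u w^(q-1) + v w^(q-1)], and Hoelder bounds each term. *)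
have HS : S <= (pmean q u + pmean q v) * S `^ ((q - 1) / q).
  have {1}-> : S = avg (fun l => u l * w l `^ (q - 1)) +
                   avg (fun l => v l * w l `^ (q - 1)).
    rewrite -avgD /S; congr avg; apply/funext => l.
    by rewrite -mulrDl (mulr_powRB1 (w0 l) q0).
  by rewrite mulrDl lerD // hoelder_w.
have -> : pmean q (fun l => u l + v l) = S `^ q^-1 by [].
clearbody S.
move: S0; rewrite le_eqVlt => /predU1P[S0|Spos].
  by rewrite -S0 powR0 ?invr_neq0 ?lt0r_neq0 // addr_ge0 ?pmean_ge0.
have split_S : S = S `^ q^-1 * S `^ ((q - 1) / q).
  rewrite -powRD; last by rewrite (gt_eqF Spos) implybT.
  have -> : q^-1 + (q - 1) / q = 1 by field; rewrite lt0r_neq0.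
  by rewrite powRr1 // ltW.
have Y0 : 0 < S `^ ((q - 1) / q) by apply: powR_gt0.
by rewrite -(ler_pM2r Y0) -split_S.
Qed.

Lemma vmax_ge0 v : 0 <= vmax v.
Proof. by apply: bigmax_ge_id. Qed.

Lemma le_vmax v l : v l <= vmax v.
Proof. exact: le_bigmax. Qed.

Lemma pmean_le_vmax q v : 0 < q -> (forall l, 0 <= v l) -> pmean q v <= vmax v.
Proof.
move=> q0 v0; rewrite -[leRHS](pmean_cst (lt0r_neq0 q0) (vmax_ge0 v)).
by apply: ler_pmean => // l; rewrite v0 le_vmax.
Qed.

Lemma lnorm_pmean (n : nat) v : (forall l, 0 <= v l) -> lnorm (XN n) v = pmean n%:R v.
Proof.
move=> v0; rewrite /pmean /avg /=; congr ((_ * _) `^ _).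
by apply: eq_bigr => l _; rewrite ger0_norm // powR_mulrn.
Qed.

Lemma lnorm_vmax v : (forall l, 0 <= v l) -> lnorm XInf v = vmax v.
Proof. by move=> v0; apply: eq_bigr => l _; rewrite ger0_norm. Qed.

Lemma lnorm_ge0 (e : xnat) v : 0 <= lnorm e v.
Proof. by case: e => [n|] /=; [apply: powR_ge0 | apply: bigmax_ge_id]. Qed.

Lemma ler_lnorm (e : xnat) u v : xpos e -> (forall l, 0 <= u l <= v l) ->
  lnorm e u <= lnorm e v.
Proof.
move=> e0 uv; have u0 l : 0 <= u l by case/andP: (uv l).
have v0 l : 0 <= v l by case/andP: (uv l) => /le_trans; apply.
case: e e0 => [n|] e0.
  by rewrite (lnorm_pmean n u0) (lnorm_pmean n v0) ler_pmean ?ltr0n.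
rewrite !lnorm_vmax //; apply: bigmax_le (vmax_ge0 v) _ => l _.
by case/andP: (uv l) => _ /le_trans; apply; apply: le_vmax.
Qed.

Lemma lnorm_triangle (e : xnat) u v :
  xpos e -> (forall l, 0 <= u l) -> (forall l, 0 <= v l) ->
  lnorm e (fun l => u l + v l) <= lnorm e u + lnorm e v.
Proof.
move=> e0 u0 v0; have uv0 l : 0 <= u l + v l by rewrite addr_ge0.
case: e e0 => [n|] e0.
  rewrite (lnorm_pmean n uv0) (lnorm_pmean n u0) (lnorm_pmean n v0).
  by rewrite pmean_minkowski ?ler1n.
rewrite !lnorm_vmax //; apply: bigmax_le; first by rewrite addr_ge0 ?vmax_ge0.
by move=> l _; apply: lerD; apply: le_vmax.
Qed.

Lemma lnorm_le_exp (e f : xnat) v : xpos e -> xle e f -> (forall l, 0 <= v l) ->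
  lnorm e v <= lnorm f v.
Proof.
move=> e0 ef v0; case: e f e0 ef => [a|] [b|] e0 ef.
- by rewrite (lnorm_pmean a v0) (lnorm_pmean b v0) pmean_le_exp ?ltr0n ?ler_nat.
- by rewrite lnorm_pmean // lnorm_vmax // pmean_le_vmax // ltr0n.
- by case: ef.
- exact: lexx.
Qed.

Lemma xinv_le_xle (e f : xnat) : xpos e -> xpos f -> xinv R f <= xinv R e -> xle e f.
Proof.
case: e f => [a|] [c|] //= a0 c0.
  by rewrite lef_pV2 ?posrE ?ltr0n // ler_nat.
by rewrite invr_le0 lern0 => /eqP c_eq0; rewrite c_eq0 in c0.
Qed.

Section RatioBound.
Variables (k r : xnat) (D cf : 'I_L -> R).
Hypotheses (D0 : forall l, 0 <= D l) (cf0 : forall l, 0 <= cf l).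
Hypothesis cf0_D0 : forall l, cf l = 0 -> D l = 0.
Hypotheses (k_pos : xpos k) (r_pos : xpos r).

Let u l := D l / cf l.

Let u0 l : 0 <= u l.
Proof. exact: divr_ge0. Qed.

(* [cf l = 0] gives [u l = 0] since [x / 0 = 0]; then [cf0_D0] repairs the identity. *)
Let D_split l : D l = u l * cf l.
Proof.
rewrite /u; have [cfl0|cfl] := eqVneq (cf l) 0; last by rewrite divfK.
by rewrite cfl0 mulr0 cf0_D0.
Qed.

Lemma lnorm_le_of_ratio_inf : xle k r -> lnorm XInf (fun l => D l / cf l) <= 1 ->
  lnorm k D <= lnorm r cf.
Proof.
move=> kr; rewrite lnorm_vmax // => u1.
apply: le_trans (lnorm_le_exp k_pos kr cf0); apply: ler_lnorm => // l.
rewrite D0 D_split /=; apply: ler_piMl (cf0 l) _.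
exact: le_trans (le_vmax u l) u1.
Qed.

Lemma lnorm_le_of_ratio_fin (a b : nat) : k = XN a -> (a <= b)%N ->
  xinv R r <= a%:R^-1 - b%:R^-1 -> lnorm (XN b) (fun l => D l / cf l) <= 1 ->
  lnorm k D <= lnorm r cf.
Proof.
move=> ka ab hr; have a_pos : (0 < a)%N by move: k_pos; rewrite ka.
have a0 : 0 < a%:R :> R by rewrite ltr0n.
rewrite ka -/u (lnorm_pmean _ u0) (lnorm_pmean _ D0) => u1.
have -> : D = (fun l => u l * cf l) by apply/funext => l; apply: D_split.
move: ab; rewrite leq_eqVlt => /predU1P[ab|ab].
  have -> : r = XInf.
    case: r r_pos hr => // c c0; rewrite ab subrr /= invr_le0 lern0 => /eqP c_eq0.
    by rewrite c_eq0 in c0.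
  have D_le l : 0 <= u l * cf l <= vmax cf * u l.
    by rewrite mulr_ge0 //= mulrC ler_wpM2r // le_vmax.
  rewrite lnorm_vmax //; apply: le_trans (ler_pmean a0 D_le) _.
  by rewrite pmeanZ ?vmax_ge0 //; apply: ler_piMr; [exact: vmax_ge0 | rewrite ab].
pose s := (a%:R^-1 - b%:R^-1 : R)^-1.
have s0 : 0 < s.
  by rewrite invr_gt0 subr_gt0 ltf_pV2 ?posrE ?ltr0n ?ltr_nat // (ltn_trans a_pos ab).
have ab' : a%:R < b%:R :> R by rewrite ltr_nat.
have sV : s^-1 = a%:R^-1 - b%:R^-1 by rewrite invrK.
apply: le_trans (pmean_hoelder a0 ab' s0 sV u0 cf0) _.
apply: le_trans (ler_piMl (pmean_ge0 _ _) u1) _.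
case: r r_pos hr => [c|] c0 hr; last by rewrite lnorm_vmax // pmean_le_vmax.
rewrite (lnorm_pmean _ cf0); apply: (pmean_le_exp s0 _ cf0).
rewrite -lef_pV2 ?posrE ?ltr0n ?s0 //.
by rewrite -sV in hr.
Qed.

Lemma lnorm_le_of_ratio m :
  (xle k m /\ xinv R r <= xinv R k - xinv R m) \/ (xle k r /\ r = XInf /\ m = XInf) ->
  lnorm m (fun l => D l / cf l) <= 1 -> lnorm k D <= lnorm r cf.
Proof.
case: m => [b|] [[km hr]|[kr [_ mb]]] //; last exact: lnorm_le_of_ratio_inf.
  have [a ka] : exists a, k = XN a by case: k km => // a; exists a.
  by rewrite ka in km hr; apply: lnorm_le_of_ratio_fin ka km hr.
by apply: lnorm_le_of_ratio_inf; apply: xinv_le_xle; rewrite // -[xinv R k]subr0.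
Qed.
End RatioBound.
End PowerMean.

Section Blocks.
Variable A : finType.
Implicit Types (x : nat -> A) (Y : int -> A) (w : seq A).

Lemma preS x k : pre x k.+1 = x k :: pre x k.
Proof. by rewrite /pre mkseqS rev_rcons. Qed.

Lemma pre_drop x j k : (j <= k)%N -> pre x j = drop (k - j) (pre x k).
Proof.
elim: k => [|k IHk]; first by rewrite leqn0 => /eqP ->.
rewrite leq_eqVlt => /predU1P[->|jk]; first by rewrite subnn drop0.
by rewrite preS subSn // IHk.
Qed.

Lemma blockS Y (t : int) k : block Y t k.+1 = Y (t - k%:Z) :: block Y t k.
Proof.
rewrite /block /= (iotaDl 1 0) -map_comp; congr (Y _ :: _); first lia.
by apply: eq_map => j /=; congr Y; lia.
Qed.

Lemma block_rcons Y (t : int) k :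
  block Y (t + 1) k.+1 = rcons (block Y t k) (Y (t + 1)).
Proof.
rewrite /block -addn1 iotaD add0n map_cat /= cats1; congr (rcons _ (Y _)); last lia.
by apply: eq_map => j /=; congr Y; lia.
Qed.

Lemma pre_past Y (i : nat) k : pre (past Y i) k = block Y (i%:Z - 1) k.
Proof.
elim: k => [|k IHk] //; rewrite preS blockS IHk /past; congr (Y _ :: _); lia.
Qed.

Lemma Ncount_gt0_size Y j w : (0 < Ncount Y j w)%N -> (size w <= j)%N.
Proof.
move=> /leq_trans/(_ (count_size _ _)); rewrite size_iota; lia.
Qed.

Lemma NcountE Y n w : (0 < n)%N ->
  Ncount Y n.-1 w = count (fun i : nat => block Y i%:Z (size w) == w)
                          (iota (size w) (n - size w)).
Proof. by move=> n0; rewrite /Ncount prednK. Qed.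

Lemma sum_count_fiber (R : numDomainType) (s : seq nat) (P : pred nat) (f : nat -> A) :
  \sum_(a : A) (count (fun i => P i && (f i == a)) s)%:R = (count P s)%:R :> R.
Proof.
elim: s => [|i s IHs] /=; first by rewrite big1.
under eq_bigr do rewrite natrD; rewrite big_split /= IHs natrD; congr (_ + _).
case: (P i) => /=; last by rewrite big1.
by rewrite (bigD1 (f i)) //= eqxx big1 ?addr0 // => a /negbTE; rewrite eq_sym => ->.
Qed.

Lemma sum_Ncount_rcons (R : numDomainType) Y n w : (0 < n)%N ->
  \sum_(a : A) (Ncount Y n (rcons w a))%:R = (Ncount Y n.-1 w)%:R :> R.
Proof.
move=> n0; rewrite NcountE // -(sum_count_fiber R _ _ (fun i : nat => Y (i%:Z + 1))).
apply: eq_bigr => a _; congr (_%:R).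
rewrite /Ncount size_rcons subSS -add1n iotaDl count_map; apply: eq_count => i /=.
by rewrite (_ : (1 + i)%N%:Z = i%:Z + 1) ?block_rcons ?eqseq_rcons //; lia.
Qed.

Lemma sum_block_if (R : numDomainType) Y n w (c : R) : (0 < n)%N ->
  \sum_((size w).+1 <= i < n.+1) (if block Y (i%:Z - 1) (size w) == w then c else 0)
  = (Ncount Y n.-1 w)%:R * c.
Proof.
move=> n0; rewrite NcountE // /index_iota subSS -add1n iotaDl big_map.
elim: (iota _ _) => [|i s IHs]; first by rewrite big_nil mul0r.
rewrite big_cons IHs /= natrD mulrDl (_ : (1 + i)%N%:Z - 1 = i%:Z); last lia.
by case: (_ == w); rewrite ?mul1r ?mul0r.
Qed.
End Blocks.

Section CompleteTree.
Variables (A : finType) (T : set (str A)).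
Hypotheses (T_tree : is_tree T) (T_complete : complete T).

Lemma tree_pre_le x j k : (k <= j)%N -> T (SFin (pre x j)) -> T (SFin (pre x k)).
Proof.
have [_ T_par _] := T_tree; elim: j => [|j IHj]; first by rewrite leqn0 => /eqP ->.
rewrite leq_eqVlt => /predU1P[-> //|kj] Tj; apply: IHj => //.
by move: (T_par _ Tj); rewrite preS; apply.
Qed.

(* By completeness, a node with one child in [T] has all its children in [T]. *)
Lemma complete_no_sibling w :
  w <> [::] -> ~ T (SFin w) -> forall a, ~ T (SFin (a :: par w)).
Proof.
have [_ T_par _] := T_tree; case: w => [//|b v] _ Tbv a Tav /=.
have Tv : T (SFin v) by apply: (T_par (a :: v)).
have full := T_complete Tv (fun '(conj _ leaf) => leaf a Tav).
have /(_ b) := subset_cardP full (subset_predT _).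
by rewrite inE => /idP; rewrite inE => /asboolP.
Qed.
End CompleteTree.

(* Since [par w] has no child in [T], the [T]-context of a past ending in [par w]
   is read off within [par w], so both pasts have the same context. *)
Lemma context_tree_par_eq (R : realType) (A : finType) (L : nat)
    (p : 'I_L -> (nat -> A) -> A -> R) (T : set (str A)) w x y :
  is_context_tree p T -> complete T -> w <> [::] -> ~ T (SFin w) ->
  pre x (size w).-1 = par w -> pre y (size w).-1 = par w -> forall l, p l x = p l y.
Proof.
move=> [T_tree T_ctx] T_complete w_nil Tw xw yw.
have [T_nil _ T_inf] := T_tree; set K := (size w).-1 in xw yw.
have no_child := complete_no_sibling T_tree T_complete w_nil Tw.
have depth_le z : pre z K = par w -> forall j, T (SFin (pre z j)) -> (j <= K)%N.
  move=> zw j Tj; rewrite leqNgt; apply/negP => Kj.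
  by have := tree_pre_le T_tree Kj Tj; rewrite preS zw; apply: no_child.
have not_inf z : pre z K = par w -> ~ T (SInf z).
  by move=> zw /T_inf/(_ K.+1); rewrite preS zw; apply: no_child.
have xy j : (j <= K)%N -> pre y j = pre x j.
  by move=> jK; rewrite (pre_drop y jK) (pre_drop x jK) xw yw.
have T_ex : exists j, `[< T (SFin (pre x j)) >] by exists 0%N; apply/asboolP.
have T_bound j : `[< T (SFin (pre x j)) >] -> (j <= K)%N.
  by move/asboolP; apply: depth_le.
case: (ex_maxnP T_ex T_bound) => k /asboolP Tk k_max.
apply: (T_ctx x y (SFin (pre x k))).
  exists k; split=> // [j Tj|]; last exact: not_inf.
  by apply: k_max; apply/asboolP.
have kK := T_bound _ (asboolT Tk).
exists k; rewrite xy //; split=> // [j Tj|]; last exact: not_inf.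
by have jK := depth_le y yw j Tj; rewrite xy // in Tj; apply: k_max; apply/asboolP.
Qed.

Section Estimates.
Variables (R : realType) (A : finType) (L : nat).
Variables (Xs : 'I_L -> int -> A) (p : 'I_L -> (nat -> A) -> A -> R).

Let Ncount_neq0 n w l : posN Xs n w -> (Ncount (Xs l) n.-1 w)%:R != 0 :> R.
Proof. by move/forallP/(_ l); rewrite pnatr_eq0 -lt0n. Qed.

Lemma phat_dist n l w : (0 < n)%N -> posN Xs n w -> is_dist (phat R Xs n l w).
Proof.
move=> n0 Nw; rewrite /phat Nw; split=> [a|]; first by rewrite divr_ge0.
by rewrite -mulr_suml sum_Ncount_rcons // mulfV ?Ncount_neq0.
Qed.

Lemma pbar_const n l w (q : A -> R) : (0 < n)%N -> posN Xs n w ->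
  (forall i : nat, block (Xs l) (i%:Z - 1) (size w) = w -> p l (past (Xs l) i) = q) ->
  pbar Xs p n l w = q.
Proof.
move=> n0 Nw p_occ; apply/funext => a; rewrite /pbar Nw.
rewrite (eq_bigr (fun i => if block (Xs l) (i%:Z - 1) (size w) == w then q a else 0)).
  by rewrite sum_block_if // mulKf ?Ncount_neq0.
by move=> i _; case: eqP => // /p_occ ->.
Qed.
End Estimates.

Section OutsideContextTree.
Variables (R : realType) (A : finType) (L : nat).
Hypothesis L_gt0 : (0 < L)%N.
Variables (Xs : 'I_L -> int -> A) (p : 'I_L -> (nat -> A) -> A -> R).
Hypothesis p_dist : forall l x, is_dist (p l x).
Variable Tstar : set (str A).
Hypotheses (Tstar_ctx : is_context_tree p Tstar) (Tstar_complete : complete Tstar).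
Variables (d : 'I_L -> (A -> R) -> (A -> R) -> R) (conf : str A -> 'I_L -> R).
Hypothesis d_ge0 : forall l q q', is_dist q -> is_dist q' -> 0 <= d l q q'.
Hypothesis d_sym : forall l q q', is_dist q -> is_dist q' -> d l q q' = d l q' q.
Hypothesis d_triangle : forall l q q' q'', is_dist q -> is_dist q' -> is_dist q'' ->
  d l q q'' <= d l q q' + d l q' q''.
Hypothesis conf_ge0 : forall w l, 0 <= conf w l.
Variables (k r m : xnat) (n : nat) (c : R).
Hypotheses (k_pos : xpos k) (r_pos : xpos r).
Hypothesis exponents :
  (xle k m /\ xinv R r <= xinv R k - xinv R m) \/ (xle k r /\ r = XInf /\ m = XInf).
Hypothesis good : Good Xs p d conf n m.
Hypothesis c_ge1 : 1 <= c.

Let dev l w := d l (pbar Xs p n l w) (phat R Xs n l w).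

Lemma lnorm_dev_le_conf w : (0 < n)%N -> posN Xs n w ->
  (forall l, is_dist (pbar Xs p n l w)) -> lnorm k (dev ^~ w) <= lnorm r (conf (SFin w)).
Proof.
move=> n0 Nw pbar_dist; have [conf0_dev ratio] := good Nw.
apply: (lnorm_le_of_ratio L_gt0 _ _ conf0_dev k_pos r_pos exponents ratio) => // l.
by apply: d_ge0 => //; apply: phat_dist.
Qed.

Lemma pbar_outside_tree b v w : (0 < n)%N -> ~ Tstar (SFin (b :: v)) -> suffix v w ->
  posN Xs n w -> forall l, pbar Xs p n l w = p l (fun j => nth b (rev v) j).
Proof.
move=> n0 Tbv vw Nw l; apply: pbar_const => // i occ.
apply: (context_tree_par_eq Tstar_ctx Tstar_complete (w := b :: v)) => //=.
  by rewrite (pre_drop _ (size_suffix vw)) pre_past occ; move: vw; rewrite suffixE => /eqP.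
by rewrite /pre -(size_rev v) mkseq_nth revK.
Qed.

Lemma CanRmv_outside_tree w : posN Xs n w -> w <> [::] -> ~ Tstar (SFin w) ->
  CanRmv Xs d conf c k r n w.
Proof.
case: w => [//|b v] Nw _ Tw w' w'' Nw' Nw'' sw' sw''.
have {}Nw' : posN Xs n w' := Nw'; have {}Nw'' : posN Xs n w'' := Nw''.
have n0 : (0 < n)%N.
  by have := Ncount_gt0_size (forallP Nw (Ordinal L_gt0)); case: n.
have vw' : suffix v w' := suffix_trans (suffix_cons v b) sw'.
have pbar_eq := pbar_outside_tree n0 Tw.
have dist_phat w1 l : posN Xs n w1 -> is_dist (phat R Xs n l w1) by apply: phat_dist.
have dist_pbar w1 l : suffix v w1 -> posN Xs n w1 -> is_dist (pbar Xs p n l w1).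
  by move=> vw1 Nw1; rewrite pbar_eq.
have dev_ge0 w1 l : suffix v w1 -> posN Xs n w1 -> 0 <= dev l w1.
  by move=> vw1 Nw1; apply: d_ge0; [apply: dist_pbar | apply: dist_phat].
(* The triangle inequality through the common law [p l _] of both [pbar]s. *)
have phat_le l : 0 <= d l (phat R Xs n l w') (phat R Xs n l w'') <= dev l w' + dev l w''.
  apply/andP; split; first by apply: d_ge0; apply: dist_phat.
  rewrite /dev (pbar_eq _ vw' Nw') (pbar_eq _ sw'' Nw'').
  rewrite (d_sym l (p_dist l _) (dist_phat w' l Nw')).
  by apply: d_triangle; [apply: dist_phat | apply: p_dist | apply: dist_phat].
apply: le_trans (ler_lnorm k_pos phat_le) _.
apply: le_trans (lnorm_triangle L_gt0 k_pos (fun l => dev_ge0 w' l vw' Nw')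
                                     (fun l => dev_ge0 w'' l sw'' Nw'')) _.
have c_mul y : 0 <= y -> y <= c * y by move=> y0; rewrite ler_peMl.
by apply: lerD; apply: le_trans (c_mul _ (lnorm_ge0 _ _)); apply: lnorm_dev_le_conf;
  rewrite // => l; apply: dist_pbar.
Qed.
End OutsideContextTree.

Section Pruning.
Variables (A : finType) (CR : seq A -> Prop) (E S : set (seq A)) (N : nat).
Hypotheses (S_nil : S [::]) (S_par : forall a w, S (a :: w) -> S w).
Hypothesis removable : forall w, E w -> w <> [::] -> ~ S w -> CR w.
Hypothesis E_size : forall w, E w -> (size w <= N)%N.

Definition prune_inv (st : set (seq A) * set (seq A)) : Prop :=
  st.1 `<=` E /\ forall w, st.2 w -> ~ S w -> ~ st.1 w.

Lemma prune_step_inv st st' : prune_step CR st st' -> prune_inv st -> prune_inv st'.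
Proof.
case=> {st st'} T M w Tw w_nil Mw leaf_w CRw [TE M_out]; split=> //=.
- by move=> v [/TE].
- by move=> v [/M_out vM Sv [Tv _]|-> _ []]; [apply: vM Sv Tv|].
- by move=> v [/M_out //|-> Sw]; have := removable (TE _ Tw) w_nil Sw.
Qed.

Lemma prune_inv_init : prune_inv (E, set0).
Proof. by split=> // w []. Qed.

Lemma prune_run_inv st st' :
  clos_refl_trans _ (prune_step CR) st st' -> prune_inv st -> prune_inv st'.
Proof. by elim=> [? ? /prune_step_inv | | ? ? ? _ IH1 _ IH2 /IH1] //. Qed.

Lemma prune_terminal_sub T M : prune_inv (T, M) -> prune_terminal (T, M) -> T `<=` S.
Proof.
move=> [TE M_out] term w Tw; apply: contrapT => Sw.
have grow v : T v -> ~ S v -> exists2 a, T (a :: v) & ~ S (a :: v).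
  move=> Tv Sv; apply: contrapT => no_child; apply: term; exists v; split=> //.
  - by move=> v_nil; apply: Sv; rewrite v_nil.
  - by move/M_out/(_ Sv).
  - by move=> a Tav; apply: no_child; exists a => // /S_par.
have: (N - size w <= N - size w)%N by []; move: {2}(N - size w)%N => j.
elim: j w Tw Sw => [|j IHj] w Tw Sw hj; have [a Taw Saw] := grow w Tw Sw.
  by have := E_size (TE _ Taw); rewrite /=; lia.
by apply: (IHj (a :: w)) => //=; lia.
Qed.
End Pruning.

Theorem theorem3p2 (R : realType) (A : finType) (L : nat)
    (d0 : measure_display) (Omega : measurableType d0) (P : probability Omega R)
    (X : 'I_L -> int -> Omega -> A) (p : 'I_L -> (nat -> A) -> A -> R)
    (Tstar : set (str A))
    (d : 'I_L -> (A -> R) -> (A -> R) -> R) (conf : str A -> 'I_L -> R)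
    (c : R) (k r m : xnat) (n : nat) (omega : Omega) (That : set (seq A)) :
  (0 < L)%N ->
  process_model P X p ->
  is_minimal_complete_context_tree p Tstar ->
  1 < c ->
  AGCT d conf k r m ->
  Good (fun l i => X l i omega) p d conf n m ->
  PruneTree_output (fun l i => X l i omega) d conf c k r n That ->
  SFin @` That `<=` Tstar.
Proof.
move=> L_gt0 model [[Tstar_ctx Tstar_complete] _] c_gt1
  [[d01 _ d_sym d_tri] [[conf01 _] [k_pos r_pos _ exponents]]] good [M [run term]].
have p_dist l x : is_dist (p l x) by have [_ [_ [_ []]]] := model l.
have d_ge0 l q q' : is_dist q -> is_dist q' -> 0 <= d l q q'.
  by move=> dq dq'; case/andP: (d01 l q q' dq dq').
have conf_ge0 w l : 0 <= conf w l by case/andP: (conf01 w l).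
have removable := CanRmv_outside_tree L_gt0 p_dist Tstar_ctx Tstar_complete
  d_ge0 d_sym d_tri conf_ge0 k_pos r_pos exponents good (ltW c_gt1).
have [[Tstar_nil Tstar_par _] _] := Tstar_ctx.
have S_par a w : Tstar (SFin (a :: w)) -> Tstar (SFin w) by move/Tstar_par; apply.
have E_size w : En (fun l i => X l i omega) n w -> (size w <= n.-1)%N.
  by move=> /forallP/(_ (Ordinal L_gt0)); apply: Ncount_gt0_size.
have inv := prune_run_inv removable run (prune_inv_init _ _).
by move=> _ [w That_w <-]; apply: (prune_terminal_sub Tstar_nil S_par E_size inv term).
Qed.
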